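(* Let $\Gamma\subseteq\mathbb R^n$ be an open convex set, $S\subseteq\Gamma$ a nonempty convex set, and $f:\Gamma\to\mathbb R$ a continuously differentiable function that is quasiconvex on $\Gamma$. Let $\bar S=\arg\min\{f(x)\mid x\in S\}$ be nonempty. Then exactly one of the following alternatives holds: (I) $\nabla f(x)\ne 0$ for all $x\in\bar S$, and the normalized gradient $\nabla f(x)/\|\nabla f(x)\|$ is constant over $\bar S$; (II) $\nabla f(x)=0$ for all $x\in\bar S$.
   Context: A function $f:\Gamma\to\mathbb R$ on a convex set $\Gamma\subseteq\mathbb R^n$ is quasiconvex on $\Gamma$ iff $f(x+t(y-x))\le\max\{f(x),f(y)\}$ for all $x,y\in\Gamma$ and $t\in[0,1]$. *)

From Stdlib Require Import Reals.
From mathcomp Require Import ssreflect ssrfun ssrbool eqtype ssrnat seq fintype bigop.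
Set Implicit Arguments. Unset Strict Implicit. Unset Printing Implicit Defensive.
Open Scope R_scope.

Definition vec (n : nat) := 'I_n -> R.

Definition vzero {n} : vec n := fun _ => 0.
Definition vadd {n} (x y : vec n) : vec n := fun i => x i + y i.
Definition vsub {n} (x y : vec n) : vec n := fun i => x i - y i.
Definition vscale {n} (t : R) (x : vec n) : vec n := fun i => t * x i.
Definition dot {n} (x y : vec n) : R := \big[Rplus/0]_(i < n) (x i * y i).
Definition vnorm {n} (x : vec n) : R := sqrt (dot x x).

Definition is_open {n} (G : vec n -> Prop) : Prop :=
  forall x, G x -> exists eps, 0 < eps /\ forall y, vnorm (vsub y x) < eps -> G y.

Definition is_convex {n} (G : vec n -> Prop) : Prop :=
  forall x y t, G x -> G y -> 0 <= t <= 1 -> G (vadd x (vscale t (vsub y x))).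

Definition quasiconvex_on {n} (G : vec n -> Prop) (f : vec n -> R) : Prop :=
  forall x y t, G x -> G y -> 0 <= t <= 1 ->
    f (vadd x (vscale t (vsub y x))) <= Rmax (f x) (f y).

Definition has_gradient {n} (f : vec n -> R) (x g : vec n) : Prop :=
  forall eps, 0 < eps -> exists delta, 0 < delta /\
    forall h, vnorm h < delta ->
      Rabs (f (vadd x h) - f x - dot g h) <= eps * vnorm h.

Definition continuous_on_vec {n} (G : vec n -> Prop) (F : vec n -> vec n) : Prop :=
  forall x, G x -> forall eps, 0 < eps -> exists delta, 0 < delta /\
    forall y, G y -> vnorm (vsub y x) < delta -> vnorm (vsub (F y) (F x)) < eps.

Definition C1_on_with_grad {n} (G : vec n -> Prop) (f : vec n -> R) (grad : vec n -> vec n) : Prop :=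
  (forall x, G x -> has_gradient f x (grad x)) /\ continuous_on_vec G grad.

Definition argmin_on {n} (S : vec n -> Prop) (f : vec n -> R) : vec n -> Prop :=
  fun x => S x /\ forall y, S y -> f x <= f y.

From Stdlib Require Import Reals Lra FunctionalExtensionality Classical.
From mathcomp Require Import ssreflect ssrfun ssrbool eqtype ssrnat seq fintype bigop.
From HB Require Import structures.
Open Scope R_scope.
Set Implicit Arguments.

(* Quasiconvexity makes the sublevel set {f <= min f} convex and f constant on
   the segment between two minimizers x, y.  If h is a descent direction at x,
   a small step along h stays in that sublevel set, so moving from y towards it
   does not increase f, whereas moving from y towards x does not decrease it
   (y is a minimizer over S); together, grad f(y).h <= 0.  Hence the open
   half-space of descent directions at x lies in the closed one at y, which
   forces equal normalized gradients.  If instead grad f(y) = 0, every point z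
   of the segment (x, y] is a convex combination of x and points near y, where
   f grows sublinearly; so grad f(z) = 0, and by continuity grad f(x) = 0. *)

HB.instance Definition _ := Monoid.isComLaw.Build R 0 Rplus
  (fun a b c => esym (Rplus_assoc a b c)) Rplus_comm Rplus_0_l.

Lemma big_Rplus_scale n c (F : 'I_n -> R) :
  \big[Rplus/0]_(i < n) (c * F i) = c * \big[Rplus/0]_(i < n) F i.
Proof. by apply: (big_rec2 (fun a b => a = c * b)) => [|i y1 y2 _ ->]; ring. Qed.

Lemma big_Rplus_ge0 (I : finType) (P : pred I) (F : I -> R) :
  (forall i, 0 <= F i) -> 0 <= \big[Rplus/0]_(i | P i) F i.
Proof. by move=> F_ge0; apply: big_ind => //; [lra | move=> a b; lra]. Qed.

Lemma big_Rplus_ge_term n (F : 'I_n -> R) i :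
  (forall j, 0 <= F j) -> F i <= \big[Rplus/0]_(j < n) F j.
Proof.
move=> F_ge0; rewrite (bigD1 i) // -{1}(Rplus_0_r (F i)).
by apply: Rplus_le_compat_l; apply: big_Rplus_ge0.
Qed.

Lemma pos_below2 r1 r2 : 0 < r1 -> 0 < r2 -> exists r, 0 < r < r1 /\ r < r2.
Proof.
move=> r1_gt0 r2_gt0; exists (Rmin r1 r2 / 2).
have := Rmin_pos _ _ r1_gt0 r2_gt0; have := Rmin_l r1 r2; have := Rmin_r r1 r2.
lra.
Qed.

Lemma dot_comm n (x y : vec n) : dot x y = dot y x.
Proof. by apply: eq_bigr => i _; ring. Qed.

Lemma dot_addl n (x y z : vec n) : dot (vadd x y) z = dot x z + dot y z.
Proof. by rewrite /dot -big_split /=; apply: eq_bigr => i _; rewrite /vadd; ring. Qed.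

Lemma dot_scalel n t (x y : vec n) : dot (vscale t x) y = t * dot x y.
Proof. by rewrite /dot -big_Rplus_scale; apply: eq_bigr => i _; rewrite /vscale; ring. Qed.

Lemma dot_subl n (x y z : vec n) : dot (vsub x y) z = dot x z - dot y z.
Proof.
have -> : vsub x y = vadd x (vscale (-1) y).
  by apply: functional_extensionality => i; rewrite /vsub /vadd /vscale; ring.
by rewrite dot_addl dot_scalel; ring.
Qed.

Lemma dot_addr n (x y z : vec n) : dot z (vadd x y) = dot z x + dot z y.
Proof. by rewrite dot_comm dot_addl !(dot_comm _ z). Qed.

Lemma dot_scaler n t (x y : vec n) : dot y (vscale t x) = t * dot y x.
Proof. by rewrite dot_comm dot_scalel (dot_comm y). Qed.

Lemma dot_subr n (x y z : vec n) : dot z (vsub x y) = dot z x - dot z y.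
Proof. by rewrite dot_comm dot_subl !(dot_comm _ z). Qed.

Lemma dot0l n (y : vec n) : dot vzero y = 0.
Proof.
have -> : (vzero : vec n) = vscale 0 y.
  by apply: functional_extensionality => i; rewrite /vscale /vzero; ring.
by rewrite dot_scalel; ring.
Qed.

Lemma dot_subsub n (a b : vec n) :
  dot (vsub a b) (vsub a b) = dot a a - 2 * dot a b + dot b b.
Proof. by rewrite !dot_subl !dot_subr (dot_comm b a); ring. Qed.

Lemma dot_self_ge0 n (x : vec n) : 0 <= dot x x.
Proof. by apply: big_Rplus_ge0 => i; nra. Qed.

Lemma dot_self_le0 n (x : vec n) : dot x x <= 0 -> x = vzero.
Proof.
move=> xx_le0; apply: functional_extensionality => i.
have := @big_Rplus_ge_term n (fun j => x j * x j) i (fun j => ltac:(nra)).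
rewrite /vzero; move: xx_le0; rewrite /dot; nra.
Qed.

Lemma vsub_eq0 n (x y : vec n) : vsub x y = vzero -> x = y.
Proof.
move=> E; apply: functional_extensionality => i.
by have := equal_f E i; rewrite /vsub /vzero; lra.
Qed.

Lemma vadd_subK n (x v : vec n) : vsub (vadd x v) x = v.
Proof. by apply: functional_extensionality => i; rewrite /vsub /vadd; ring. Qed.

Lemma vnorm_ge0 n (x : vec n) : 0 <= vnorm x.
Proof. exact: sqrt_pos. Qed.

Lemma vnorm_sq n (x : vec n) : vnorm x * vnorm x = dot x x.
Proof. by rewrite /vnorm sqrt_sqrt //; apply: dot_self_ge0. Qed.

Lemma vnorm_gt0 n (x : vec n) : x <> vzero -> 0 < vnorm x.
Proof.
move=> x_neq0; case: (Rle_lt_or_eq_dec _ _ (vnorm_ge0 x)) => // E.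
by case: x_neq0; apply: dot_self_le0; rewrite -vnorm_sq -E; lra.
Qed.

Lemma vnorm_scale n t (x : vec n) : vnorm (vscale t x) = Rabs t * vnorm x.
Proof.
rewrite /vnorm dot_scalel dot_scaler -Rmult_assoc sqrt_mult_alt; last by nra.
by rewrite sqrt_Rsqr_abs.
Qed.

Lemma vscale_small n (h : vec n) d : 0 < d ->
  exists r, 0 < r /\ forall s, 0 <= s < r -> vnorm (vscale s h) < d.
Proof.
move=> d_gt0; have h_ge0 := vnorm_ge0 h.
exists (d / (vnorm h + 1)); split; first by apply: Rdiv_lt_0_compat; lra.
move=> s [s_ge0 s_lt]; rewrite vnorm_scale Rabs_pos_eq //.
have := Rmult_lt_compat_r (vnorm h + 1) _ _ ltac:(lra) s_lt.
have : d / (vnorm h + 1) * (vnorm h + 1) = d by field; lra.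
nra.
Qed.

Lemma open_ray n (G : vec n -> Prop) x h : is_open G -> G x ->
  exists r, 0 < r /\ forall s, 0 <= s < r -> G (vadd x (vscale s h)).
Proof.
move=> G_open Gx; have [e [e_gt0 ball_e]] := G_open x Gx.
have [r [r_gt0 small]] := vscale_small h e_gt0.
by exists r; split => // s s_in; apply: ball_e; rewrite vadd_subK; apply: small.
Qed.

Lemma segment_near_start n (x y : vec n) d : 0 < d ->
  exists l, 0 < l <= 1 /\ vnorm (vsub (vadd x (vscale l (vsub y x))) x) < d.
Proof.
move=> d_gt0; have [r [r_gt0 small]] := vscale_small (vsub y x) d_gt0.
have [l [l_in l_lt]] := @pos_below2 1 r ltac:(lra) r_gt0.
by exists l; split; [lra | rewrite vadd_subK; apply: small; lra].
Qed.

Lemma has_gradient_ray n (f : vec n -> R) x g h : has_gradient f x g ->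
  forall eps, 0 < eps -> exists r, 0 < r /\ forall s, 0 < s < r ->
    f x + s * dot g h - eps * s <= f (vadd x (vscale s h))
    <= f x + s * dot g h + eps * s.
Proof.
move=> grad_fx eps eps_gt0; have h_ge0 := vnorm_ge0 h.
set e := eps / (vnorm h + 1).
have e_gt0 : 0 < e by apply: Rdiv_lt_0_compat; lra.
have e_h : e * vnorm h <= eps.
  have : e * (vnorm h + 1) = eps by rewrite /e; field; lra.
  nra.
have [d [d_gt0 approx]] := grad_fx e e_gt0.
have [r [r_gt0 small]] := vscale_small h d_gt0.
exists r; split => // s [s_gt0 s_lt].
have := approx _ (small s ltac:(lra)).
rewrite dot_scaler vnorm_scale (Rabs_pos_eq s); last lra.
move=> bound; have := Rle_abs (f (vadd x (vscale s h)) - f x - s * dot g h).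
have := Rle_abs (- (f (vadd x (vscale s h)) - f x - s * dot g h)).
rewrite Rabs_Ropp; nra.
Qed.

Lemma grad_dot_le0_of_sublinear n (f : vec n -> R) x g h : has_gradient f x g ->
  (forall eps, 0 < eps -> exists r, 0 < r /\ forall s, 0 < s < r ->
     f (vadd x (vscale s h)) <= f x + eps * s) ->
  dot g h <= 0.
Proof.
move=> grad_fx sublin; apply: Rnot_lt_le => gh_gt0.
have [r1 [r1_gt0 ray]] := has_gradient_ray h grad_fx (eps := dot g h / 4) ltac:(lra).
have [r2 [r2_gt0 up]] := sublin (dot g h / 4) ltac:(lra).
have [s [s_in s_lt]] := pos_below2 r1_gt0 r2_gt0.
have := ray s ltac:(lra); have := up s ltac:(lra); nra.
Qed.

Lemma grad_dot_ge0_of_ray_min n (f : vec n -> R) x g h r : has_gradient f x g ->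
  0 < r -> (forall s, 0 < s < r -> f x <= f (vadd x (vscale s h))) ->
  0 <= dot g h.
Proof.
move=> grad_fx r_gt0 ray_min; apply: Rnot_lt_le => gh_lt0.
have [r1 [r1_gt0 ray]] := has_gradient_ray h grad_fx (eps := - dot g h / 2) ltac:(lra).
have [s [s_in s_lt]] := pos_below2 r1_gt0 r_gt0.
have := ray s ltac:(lra); have := ray_min s ltac:(lra); nra.
Qed.

Lemma descent_step n (G : vec n -> Prop) (f : vec n -> R) x g h :
  is_open G -> G x -> has_gradient f x g -> dot g h < 0 ->
  exists s, 0 < s /\ G (vadd x (vscale s h)) /\ f (vadd x (vscale s h)) <= f x.
Proof.
move=> G_open Gx grad_fx gh_lt0.
have [r1 [r1_gt0 ray]] := has_gradient_ray h grad_fx (eps := - dot g h / 2) ltac:(lra).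
have [r2 [r2_gt0 inG]] := open_ray x h G_open Gx.
have [s [s_in s_lt]] := pos_below2 r1_gt0 r2_gt0.
exists s; split; [lra | split; first by apply: inG; lra].
by have := ray s ltac:(lra); nra.
Qed.

Lemma quasiconvex_grad_sublevel n (G : vec n -> Prop) (f : vec n -> R) y z g :
  quasiconvex_on G f -> G y -> G z -> f z <= f y -> has_gradient f y g ->
  dot g (vsub z y) <= 0.
Proof.
move=> qc Gy Gz fz_le grad_fy.
apply: (grad_dot_le0_of_sublinear _ grad_fy) => eps eps_gt0.
exists 1; split => [|s s_in]; first lra.
have := qc y z s Gy Gz ltac:(lra); rewrite Rmax_left //; nra.
Qed.

Lemma argmin_on_eq n (S : vec n -> Prop) f x y :
  argmin_on S f x -> argmin_on S f y -> f x = f y.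
Proof. by move=> [Sx min_x] [Sy min_y]; have := min_x y Sy; have := min_y x Sx; lra. Qed.

Lemma argmin_on_grad_dot_ge0 n (S : vec n -> Prop) (f : vec n -> R) x y g :
  is_convex S -> argmin_on S f y -> S x -> has_gradient f y g ->
  0 <= dot g (vsub x y).
Proof.
move=> S_conv [Sy min_y] Sx grad_fy.
apply: (grad_dot_ge0_of_ray_min _ grad_fy (r := 1)) => [|s s_in]; first lra.
by apply: min_y; apply: S_conv => //; lra.
Qed.

Lemma argmin_on_segment n (G S : vec n -> Prop) f x y t :
  (forall z, S z -> G z) -> is_convex S -> quasiconvex_on G f ->
  argmin_on S f x -> argmin_on S f y -> 0 <= t <= 1 ->
  argmin_on S f (vadd x (vscale t (vsub y x))) /\
  f (vadd x (vscale t (vsub y x))) = f x.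
Proof.
move=> S_G S_conv qc min_x min_y t_in.
have fxy := argmin_on_eq min_x min_y.
case: min_x min_y => [Sx le_x] [Sy le_y].
have Sz := S_conv _ _ _ Sx Sy t_in.
have fz_le := qc _ _ _ (S_G _ Sx) (S_G _ Sy) t_in.
rewrite -fxy Rmax_left in fz_le; last lra.
have fz_ge := le_x _ Sz.
split; last lra.
by split => // w Sw; have := le_x w Sw; lra.
Qed.

Lemma continuous_on_vec_eq0 n (G : vec n -> Prop) (F : vec n -> vec n) x :
  continuous_on_vec G F -> G x ->
  (forall d, 0 < d -> exists z, G z /\ vnorm (vsub z x) < d /\ F z = vzero) ->
  F x = vzero.
Proof.
move=> F_cont Gx near0; apply: NNPP => Fx_neq0.
have [d [d_gt0 cont]] := F_cont x Gx _ (vnorm_gt0 Fx_neq0).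
have [z [Gz [zx_lt Fz0]]] := near0 d d_gt0.
have := cont z Gz zx_lt; rewrite Fz0.
have -> : vsub vzero (F x) = vscale (-1) (F x).
  by apply: functional_extensionality => i; rewrite /vsub /vscale /vzero; ring.
by rewrite vnorm_scale Rabs_Ropp Rabs_R1; lra.
Qed.

Lemma normalized_eq_of_descent_incl n (a b : vec n) : a <> vzero -> b <> vzero ->
  (forall h, dot a h < 0 -> dot b h <= 0) ->
  vscale (/ vnorm a) a = vscale (/ vnorm b) b.
Proof.
move=> a_neq0 b_neq0 descent.
have na := vnorm_gt0 a_neq0; have nb := vnorm_gt0 b_neq0.
have aa := vnorm_sq a; have bb := vnorm_sq b.
set u := vscale (/ vnorm a) a; set w := vscale (/ vnorm b) b.
set p := dot u w.
have uu : dot u u = 1 by rewrite /u dot_scalel dot_scaler -aa; field; lra.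
have ww : dot w w = 1 by rewrite /w dot_scalel dot_scaler -bb; field; lra.
have au : dot a u = vnorm a by rewrite /u dot_scaler -aa; field; lra.
have bw : dot b w = vnorm b by rewrite /w dot_scaler -bb; field; lra.
have aw : dot a w = vnorm a * p by rewrite /p /u /w dot_scalel !dot_scaler; field; lra.
have bu : dot b u = vnorm b * p.
  by rewrite /p /u /w dot_scalel !dot_scaler (dot_comm b a); field; lra.
(* w - u is a descent direction for a unless u = w *)
have p_ge1 : 1 <= p.
  apply: Rnot_lt_le => p_lt1.
  have := descent (vsub w u); rewrite !dot_subr aw au bw bu => descent_wu.
  by have := descent_wu ltac:(nra); nra.
apply: esym; apply: vsub_eq0; apply: dot_self_le0.
by rewrite dot_subsub ww uu (dot_comm w u) -/p; lra.
Qed.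

Section Minimizers.

Variables (n : nat) (G S : vec n -> Prop) (f : vec n -> R) (grad : vec n -> vec n).
Hypotheses (G_open : is_open G) (S_G : forall z, S z -> G z) (S_conv : is_convex S)
  (f_grad : forall z, G z -> has_gradient f z (grad z)) (f_qc : quasiconvex_on G f).

Lemma argmin_descent_incl x y h :
  argmin_on S f x -> argmin_on S f y -> dot (grad x) h < 0 -> dot (grad y) h <= 0.
Proof.
move=> min_x min_y gxh_lt0.
have Gx := S_G (proj1 min_x); have Gy := S_G (proj1 min_y).
have [s [s_gt0 [Gz fz_le]]] := descent_step G_open Gx (f_grad Gx) gxh_lt0.
rewrite (argmin_on_eq min_x min_y) in fz_le.
have toward_z := quasiconvex_grad_sublevel _ f_qc Gy Gz fz_le (f_grad Gy).
have toward_x := argmin_on_grad_dot_ge0 _ S_conv min_y (proj1 min_x) (f_grad Gy).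
have zy : vsub (vadd x (vscale s h)) y = vadd (vsub x y) (vscale s h).
  by apply: functional_extensionality => i; rewrite /vsub /vadd /vscale; ring.
by rewrite zy dot_addr dot_scaler in toward_z; nra.
Qed.

Lemma argmin_segment_grad0 x y l :
  argmin_on S f x -> argmin_on S f y -> grad y = vzero -> 0 < l <= 1 ->
  grad (vadd x (vscale l (vsub y x))) = vzero.
Proof.
move=> min_x min_y gy0 l_in.
have [min_z fz] := argmin_on_segment S_G S_conv f_qc min_x min_y (t := l) ltac:(lra).
set z := vadd x (vscale l (vsub y x)) in min_z fz *.
have Gx := S_G (proj1 min_x); have Gy := S_G (proj1 min_y).
set h := grad z.
apply: dot_self_le0; apply: (grad_dot_le0_of_sublinear _ (f_grad (S_G (proj1 min_z)))).
move=> eps eps_gt0.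
have [r1 [r1_gt0 ray]] := has_gradient_ray h (f_grad Gy) (eps := eps * l) ltac:(nra).
have [r2 [r2_gt0 inG]] := open_ray y h G_open Gy.
have [r [r_in r_lt]] := pos_below2 r1_gt0 r2_gt0.
exists (l * r); split => [|s s_in]; first nra.
set p := vadd y (vscale (s / l) h).
have s_l : s / l * l = s by field; lra.
have s_l_in : 0 < s / l < r.
  by split; [apply: Rdiv_lt_0_compat | apply: (Rmult_lt_reg_r l); rewrite ?s_l]; nra.
have Gp : G p by apply: inG; lra.
have fp : f p <= f y + eps * s by have := ray (s / l) ltac:(lra); rewrite gy0 dot0l -/p; nra.
(* z + s h lies on the segment from x to p, a point where f is almost minimal *)
have -> : vadd z (vscale s h) = vadd x (vscale l (vsub p x)).
  apply: functional_extensionality => i; rewrite /z /p /vsub /vadd /vscale; field; lra.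
rewrite fz; apply: Rle_trans (f_qc Gx Gp (t := l) ltac:(lra)) _.
by rewrite (argmin_on_eq min_x min_y); apply: Rmax_lub; nra.
Qed.

Lemma argmin_grad0_spread x y : continuous_on_vec G grad ->
  argmin_on S f x -> argmin_on S f y -> grad y = vzero -> grad x = vzero.
Proof.
move=> grad_cont min_x min_y gy0.
apply: (continuous_on_vec_eq0 _ grad_cont (S_G (proj1 min_x))) => d d_gt0.
have [l [l_in near_x]] := segment_near_start x y d_gt0.
have [min_z _] := argmin_on_segment S_G S_conv f_qc min_x min_y (t := l) ltac:(lra).
exists (vadd x (vscale l (vsub y x))); split; first exact: S_G (proj1 min_z).
by split => //; apply: argmin_segment_grad0.
Qed.

End Minimizers.

Theorem lemma6 (n : nat) (Gamma S : vec n -> Prop) (f : vec n -> R) (grad : vec n -> vec n)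
  (hGopen : is_open Gamma) (hGconv : is_convex Gamma)
  (hSsub : forall x, S x -> Gamma x) (hSne : exists x, S x) (hSconv : is_convex S)
  (hf : C1_on_with_grad Gamma f grad) (hqc : quasiconvex_on Gamma f)
  (hSbar : exists x, argmin_on S f x) :
  let I := (forall x, argmin_on S f x -> grad x <> vzero) /\
           (forall x y, argmin_on S f x -> argmin_on S f y ->
              vscale (/ vnorm (grad x)) (grad x) = vscale (/ vnorm (grad y)) (grad y)) in
  let II := forall x, argmin_on S f x -> grad x = vzero in
  (I /\ ~ II) \/ (~ I /\ II).
Proof.
move=> I II; have [x0 min_x0] := hSbar; case: hf => f_grad grad_cont.
have spread := argmin_grad0_spread hGopen hSsub hSconv f_grad hqc grad_cont.
case: (classic (grad x0 = vzero)) => [gx0_0 | gx0_neq0].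
- right; split; first by case=> nonzero _; exact: nonzero x0 min_x0 gx0_0.
  by move=> y min_y; exact: spread min_y min_x0 gx0_0.
- have nonzero : forall y, argmin_on S f y -> grad y <> vzero.
    by move=> y min_y gy0; apply: gx0_neq0; exact: spread min_x0 min_y gy0.
  left; split; last by move=> all0; exact: gx0_neq0 (all0 x0 min_x0).
  split=> // x y min_x min_y.
  apply: normalized_eq_of_descent_incl; [exact: nonzero | exact: nonzero |].
  by move=> h; exact: (argmin_descent_incl _ hGopen hSsub hSconv f_grad hqc min_x min_y).
Qed.
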